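(* Let $m_c\in H$, with local components $m_\lambda=\sum_{j=0,1}Y^j\sum_{\ell\ge0}b^\lambda_{j,\ell}s_\lambda^\ell$ for $\lambda\in\Lambda$. Then there exist real numbers $\alpha$ and $\beta$ such that $$v_p\big(b^\lambda_{j,\ell}\big)\ \ge\ -\big(\alpha\log_p(\ell)+\beta\big)$$ for all $\lambda\in\Lambda$, all $j\in\{0,1\}$ and all integers $\ell\ge1$.
   Context: Standing setup. Let $k$ be a finite field of odd characteristic $p$, $W(k)$ its ring of Witt vectors, $K$ the fraction field of $W(k)$, $v_p$ the $p$-adic valuation on $K$, $|\cdot|$ the $p$-adic absolute value, and $\log_p$ the real logarithm to base $p$. Let $g\ge1$ and let $\lambda_1,\dots,\lambda_{2g+1}\in W(k)$ have pairwise distinct reductions modulo $p$. Put $Q(t)=\prod_{i=1}^{2g+1}(t-\lambda_i)$ and $h(t)=\frac{Q'(t)}{2Q(t)}$. Let $\Lambda=\{\lambda_1,\dots,\lambda_{2g+1},\infty\}$, $\Lambda_0=\Lambda\setminus\{\infty\}$. The local parameter at $\lambda\in\Lambda_0$ is $s_\lambda=t-\lambda$, and at $\infty$ it is $s_\infty=t^{-1}$. Let $B_K^\dagger$ be the ring of series $\sum_{\underline\ell\ge0}a_{\underline\ell}\,t^{\ell_0}\prod_{i}(t-\lambda_i)^{-\ell_i}$ ($a_{\underline\ell}\in K$) for which there is $\eta>1$ with $|a_{\underline\ell}|\eta^{\max_i\ell_i}\to0$; $\phi_\lambda(f)$ is the Laurent expansion of $f\in B_K^\dagger$ in $s_\lambda$.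 The principal part is $\Pr_\lambda(\sum a_\ell s_\lambda^\ell)=\sum_{\ell<0}a_\ell s_\lambda^\ell$ for $\lambda\in\Lambda_0$ and $\Pr_\infty(\sum a_\ell s_\infty^\ell)=\sum_{\ell\le0}a_\ell s_\infty^\ell$; its expansion at another point $\mu$ is denoted $\phi_\mu(\cdot)$. For $\lambda\in\Lambda_0$, $\tilde R_{\lambda,c}$ is the space of $\sum_{\ell\ge0}a_\ell s_\lambda^\ell$ with $|a_\ell|\eta^\ell\to0$ for all $\eta<1$, and $R_{\infty,c}$ the analogous space of $\sum_{\ell\ge1}a_\ell s_\infty^\ell$. $B_c=\prod_{\lambda\in\Lambda_0}\tilde R_{\lambda,c}\times R_{\infty,c}$ is a $B_K^\dagger$-module via $(f\cdot G)^\mu=\phi_\mu(f)G^\mu-\sum_{\lambda\in\Lambda}\phi_\mu\big(\Pr_\lambda(\phi_\lambda(f)G^\lambda)\big)$. Let $A_K^\dagger=B_K^\dagger\oplus B_K^\dagger Y$ with $Y^2=Q(t)$, $\nabla_{GM}(1)=0$, $\nabla_{GM}(Y)=hY$; $M_c=A_K^\dagger\otimes_{B_K^\dagger}B_c$ with elements $m_c=1\otimes G_0+Y\otimes G_1$ ($G_0,G_1\in B_c$) and $\nabla_c(m_c)=1\otimes\partial_tG_0+Y\otimes(\partial_tG_1+h\cdot G_1)$, $\partial_t$ acting componentwise (as $-s_\infty^2\,d/ds_\infty$ on series in $s_\infty$). $H=\ker\nabla_c$ (the space $H^1_{MW,c}(V,\pi_*A_K^\dagger)$). Local components: $m_\lambda=G_0^\lambda+YG_1^\lambda=\sum_{j=0,1}Y^j\sum_{\ell\ge0}b^\lambda_{j,\ell}s_\lambda^\ell$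 with $b^\infty_{j,0}=0$. *)

From Stdlib Require Import Reals.
From HB Require Import structures.
From mathcomp Require Import all_boot all_order all_algebra.
Set Implicit Arguments. Unset Strict Implicit. Unset Printing Implicit Defensive.
Import Order.TTheory GRing.Theory Num.Theory.
Local Open Scope ring_scope.

Definition int_to_R (z : int) : R :=
  match z with Posz n => INR n | Negz n => Ropp (INR (S n)) end.

Definition logp (p l : nat) : R := Rdiv (ln (INR l)) (ln (INR p)).

(* [vge v x N] : v_p(x) >= N, with the convention v_p(0) = +oo *)
Definition vge (K : fieldType) (v : K -> int) (x : K) (N : int) : Prop :=
  x = 0 \/ (N <= v x).

(* K is a complete discretely valued field of characteristic 0 with
   normalized valuation v (v(p) = 1, so unramified), whose residue field
   O_K / pO_K is finite, p an odd prime.  These are exactly the fields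
   Frac W(k), k a finite field of characteristic p (with v = v_p). *)
Definition witt_frac (K : fieldType) (v : K -> int) (p : nat) : Prop :=
  prime p /\ odd p /\
  (forall m : nat, m%:R = 0 :> K -> m = 0%N) /\
  (forall x y : K, x != 0 -> y != 0 -> v (x * y) = v x + v y) /\
  (forall x y : K, x != 0 -> y != 0 -> x + y != 0 ->
       (v x <= v (x + y)) || (v y <= v (x + y))) /\
  v (p%:R) = 1 /\
  (forall u : nat -> K,
     (forall N : int, exists n0 : nat, forall i j : nat,
        (n0 <= i)%N -> (n0 <= j)%N -> vge v (u i - u j) N) ->
     exists L : K, forall N : int, exists n0 : nat, forall i : nat,
        (n0 <= i)%N -> vge v (u i - L) N) /\
  (* finite residue field k = W(k)/pW(k) *)
  (exists s : seq K, (forall y, y \in s -> vge v y 0) /\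
     forall x : K, vge v x 0 -> exists2 y, y \in s & vge v (x - y) 1).

Definition pabs (K : fieldType) (v : K -> int) (p : nat) (a : K) : R :=
  if a == 0 then R0 else Rpower (INR p) (Ropp (int_to_R (v a))).

Definition conv_c (K : fieldType) (v : K -> int) (p : nat) (a : nat -> K) : Prop :=
  forall eta : R, Rlt R0 eta -> Rlt eta R1 ->
    Un_cv (fun l => Rmult (pabs v p (a l)) (pow eta l)) R0.

Section Local.
Variables (K : fieldType) (v : K -> int) (p : nat) (n : nat) (lam : 'I_n -> K).

(* Points of Lambda: Some i = lambda_i, None = infinity.  Local parameter
   s_{lambda_i} = t - lambda_i, s_infty = 1/t.  A Laurent series at a point
   is represented by its coefficient function  int -> K  (coefficient of s^l). *)
Definition Pt := option 'I_n.

(* Expansion at mu of a principal part  sum_{k<d} F(-(k+1)) (t - lambda_la)^{-(k+1)}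
   (the principal part at the finite point la of a Laurent series F of order >= -d). *)
Definition expand_fin (d : nat) (la : 'I_n) (F : int -> K) (mu : Pt) : int -> K :=
  fun l => match mu with
  | Some m =>
      if m == la then (if l < 0 then F l else 0)
      else match l with
           | Posz l' => \sum_(k < d) F (Negz k) *
                ((-1) ^+ l' * ('C(k + l', l'))%:R * (lam m - lam la) ^- (k.+1 + l'))
           | Negz _ => 0 end
  | None =>
      match l with
      | Posz m' => \sum_(k < d | (k < m')%N)
                     F (Negz k) * ('C(m'.-1, m' - k.+1))%:R * lam la ^+ (m' - k.+1)
      | Negz _ => 0 end
  end.

(* Expansion at mu of a principal part at infinity  sum_{j<=d} F(-j) s_infty^{-j}
   = sum_{j<=d} F(-j) t^j  (order >= -d). *)
Definition expand_inf (d : nat) (F : int -> K) (mu : Pt) : int -> K :=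
  fun l => match mu with
  | None => if l <= 0 then F l else 0
  | Some m =>
      match l with
      | Posz l' => \sum_(j < d.+1) F (- (j%:Z)) * ('C(j, l'))%:R * lam m ^+ (j - l')
      | Negz _ => 0 end
  end.

Definition expand_pr (d : nat) (la : Pt) (F : int -> K) : Pt -> int -> K :=
  match la with Some i => expand_fin d i F | None => expand_inf d F end.

(* product of a Laurent series L of order >= -d with a power series G *)
Definition lmul (d : nat) (L : int -> K) (G : nat -> K) : int -> K :=
  fun k => match k + d%:Z with
           | Posz m => \sum_(j < m.+1) L (k - j%:Z) * G j
           | Negz _ => 0 end.

(* h = Q'/(2Q) = (1/2) sum_i 1/(t - lambda_i); its Laurent expansion at mu
   (order >= -1 at every point of Lambda). *)
Definition unitpole : int -> K := fun l => if l == Negz 0 then 1 else 0.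
Definition phi_h (mu : Pt) : int -> K :=
  fun l => 2^-1 * \sum_(i < n) expand_fin 1 i unitpole mu l.

Definition act_h (G : Pt -> nat -> K) (mu : Pt) (l : nat) : K :=
  lmul 1 (phi_h mu) (G mu) (l%:Z)
  - \sum_(la : Pt) expand_pr 1 la (lmul 1 (phi_h la) (G la)) mu (l%:Z).

(* partial_t componentwise: d/ds at finite points, -s^2 d/ds at infinity *)
Definition dt (mu : Pt) (G : nat -> K) (l : nat) : K :=
  match mu with
  | Some _ => (l.+1)%:R * G l.+1
  | None => - ((l.-1)%:R * G l.-1)
  end.

(* G in B_c = prod_{la in Lambda_0} R~_{la,c} x R_{infty,c} *)
Definition inBc (G : Pt -> nat -> K) : Prop :=
  G None 0%N = 0 /\ forall mu, conv_c v p (G mu).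

(* m_c = 1 (x) G0 + Y (x) G1 lies in H = ker nabla_c *)
Definition inH (G0 G1 : Pt -> nat -> K) : Prop :=
  inBc G0 /\ inBc G1 /\
  (forall mu l, dt mu (G0 mu) l = 0) /\
  (forall mu l, dt mu (G1 mu) l + act_h G1 mu l = 0).

End Local.

From Stdlib Require Import Reals Lra.
From Stdlib Require Import FunctionalExtensionality.
From HB Require Import structures.
From mathcomp Require Import all_boot all_order all_algebra.
Set Implicit Arguments. Unset Strict Implicit. Unset Printing Implicit Defensive.
Import Order.TTheory GRing.Theory Num.Theory.
Local Open Scope ring_scope.

(* At each point of Lambda the equation nabla_c(m_c) = 0 is read
   coefficientwise.  On the 1-component it says d/dt G0 = 0, so only the
   constant terms survive.  On the Y-component it becomes a recursion
     (k + a) G_k + 1/2 (T G)_k = R_k     (k >= 1),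
   where T is the logarithmic derivative of a product prod_w (1 + w s) with
   integral w, a = 1/2 at finite points and a = -n/2 at infinity, and R_k
   comes from finitely many principal-part coefficients.  The integrating
   factor E = sqrt(prod_w (1 + w s)) has integral coefficients (p is odd) and
   turns the recursion into (k + a) (E G)_k = (E R)_k.  Since
   v(k + a) <= log_p (2k + n), dividing back by E yields
   v(G_k) >= N - log_p (2k + n), and log_p (2k + n) <= log_p k + log_p (n + 2). *)

(* Formal power series in a local parameter s, with coefficients in a
   commutative ring, are coefficient sequences [nat -> R].  [conv f g] is the
   Cauchy product and [Dop f] the Euler operator s d/ds. *)
Section PowerSeries.
Variable R : comPzRingType.
Implicit Types f g h : nat -> R.

Definition conv f g : nat -> R := fun k => \sum_(0 <= i < k.+1) f i * g (k - i)%N.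
Definition Dop f : nat -> R := fun k => k%:R * f k.

Lemma convC f g : conv f g = conv g f.
Proof.
apply: functional_extensionality => k; rewrite /conv big_nat_rev /=.
rewrite big_nat_cond [RHS]big_nat_cond; apply: eq_bigr => i /andP[/andP[_ hi] _].
by rewrite add0n subSS subKn // mulrC.
Qed.

Lemma convA f g h : conv (conv f g) h = conv f (conv g h).
Proof.
apply: functional_extensionality => k; rewrite /conv.
transitivity (\sum_(0 <= a < k.+1) \sum_(0 <= i < k.+1 | (i <= a)%N)
   f i * (g (a - i)%N * h (k - a)%N)).
  rewrite big_nat_cond [RHS]big_nat_cond; apply: eq_bigr => a /andP[/andP[_ ha] _].
  rewrite mulr_suml (big_nat_widen _ _ _ _ _ ha) big_nat_cond [RHS]big_nat_cond.
  by apply: eq_bigr => i _; rewrite mulrA.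
rewrite (@exchange_big_dep_nat _ _ _ _ _ _ _ _ _ xpredT) //=.
rewrite big_nat_cond [RHS]big_nat_cond; apply: eq_bigr => i /andP[/andP[_ hi] _].
rewrite mulr_sumr (big_cat_nat _ (n := i)) //=; last exact: ltnW.
rewrite big_nat_cond big_pred0 ?add0r; last first.
  by move=> a; apply/negbTE; rewrite negb_and; case: (ltnP a i) => //= ->; rewrite orbT.
rewrite -{1}(add0n i) big_addn subSn // big_nat_cond [RHS]big_nat_cond.
apply: eq_big => [b|b _]; first by rewrite leq_addl.
by rewrite addnK subnDA subnAC.
Qed.

Lemma Dconv f g k : Dop (conv f g) k = conv (Dop f) g k + conv f (Dop g) k.
Proof.
rewrite /Dop /conv -big_split /= mulr_sumr.
apply: eq_big_nat => i /andP[_ hi].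
by rewrite -{1}(subnKC (ltnSE hi)) natrD mulrDl mulrA mulrCA.
Qed.

Lemma convDl f g h k : conv (fun j => f j + g j) h k = conv f h k + conv g h k.
Proof. by rewrite /conv -big_split; apply: eq_bigr => i _; rewrite mulrDl. Qed.

Lemma convDr f g h k : conv f (fun j => g j + h j) k = conv f g k + conv f h k.
Proof. by rewrite convC convDl !(convC _ f). Qed.

Lemma convZl c f g k : conv (fun j => c * f j) g k = c * conv f g k.
Proof. by rewrite /conv mulr_sumr; apply: eq_bigr => i _; rewrite mulrA. Qed.

Lemma convZr c f g k : conv f (fun j => c * g j) k = c * conv f g k.
Proof. by rewrite convC convZl !(convC _ f). Qed.

Lemma conv0 f g : conv f g 0 = f 0%N * g 0%N.
Proof. by rewrite /conv big_nat1. Qed.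

Lemma conv_split f g k : (1 <= k)%N ->
  conv f g k = f 0%N * g k + \sum_(1 <= i < k) f i * g (k - i)%N + f k * g 0%N.
Proof. by move=> hk; rewrite /conv big_ltn // subn0 big_nat_recr //= subnn addrA. Qed.

Lemma ode_unique (S X Y : nat -> R) :
  (forall (k : nat) (x : R), (1 <= k)%N -> k%:R * x = 0 -> x = 0) ->
  S 0%N = 0 -> Dop X = conv S X -> Dop Y = conv S Y -> X 0%N = Y 0%N ->
  forall k, X k = Y k.
Proof.
move=> hreg hS0 hX hY h0 k; elim: k {-2}k (leqnn k) => [|n IH] k hk.
  by move: hk; rewrite leqn0 => /eqP ->.
case: k hk => [|k] hk //.
have eX := f_equal (fun F => F k.+1) hX; have eY := f_equal (fun F => F k.+1) hY.
rewrite /= /Dop in eX eY.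
apply/eqP; rewrite -subr_eq0; apply/eqP; apply: (@hreg k.+1) => //.
rewrite mulrBr eX eY /conv -sumrB big_ltn // hS0 !mul0r subrr add0r.
rewrite big_nat_cond big1 // => i /andP[/andP[hi1 hi2] _]; rewrite IH ?subrr //.
by rewrite leq_subLR (leq_trans hk) // -add1n leq_add2r.
Qed.

Lemma integrating_factor (S E G : nat -> R) (a : R) k :
  Dop E = conv S E ->
  (k%:R + a) * conv E G k = conv E (fun j => Dop G j + a * G j + conv S G j) k.
Proof.
move=> hE; rewrite mulrDl -[k%:R * _]/(Dop (conv E G) k) Dconv hE.
rewrite (convC S E) convA convDr convDr convZr.
by rewrite [RHS]addrC addrA.
Qed.

(* The polynomial  F = prod_{w in ws} (1 + w s)  and its logarithmic
   derivative  T = sum_w sum_{k>=1} (-1)^(k-1) w^k s^k,  so that D F = T F. *)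
Definition Tw (w : R) (k : nat) : R := if k == 0%N then 0 else (-1) ^+ k.-1 * w ^+ k.
Definition Tws (ws : seq R) (k : nat) : R := \sum_(w <- ws) Tw w k.
Definition Lw (w : R) (k : nat) : R := if k == 0%N then 1 else if k == 1%N then w else 0.
Fixpoint Fw (ws : seq R) : nat -> R :=
  match ws with
  | [::] => fun k => if k == 0%N then 1 else 0
  | w :: ws' => conv (Lw w) (Fw ws')
  end.

Lemma Tws0 ws : Tws ws 0 = 0.
Proof. by rewrite /Tws big1. Qed.

Lemma Fw0 ws : Fw ws 0 = 1.
Proof. by elim: ws => [|w ws IH] //=; rewrite conv0 IH /Lw /= mulr1. Qed.

Lemma conv_Lw w f k : (1 <= k)%N -> conv (Lw w) f k = f k + w * f k.-1.
Proof.
case: k => // k _; rewrite /conv big_ltn // big_ltn // /Lw /= mul1r subn0 subn1 /=.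
rewrite big_nat_cond big1 ?addr0 // => i /andP[/andP[hi _] _].
by case: i hi => [|[|i]] //= _; rewrite mul0r.
Qed.

Lemma DLw w : Dop (Lw w) = conv (Tw w) (Lw w).
Proof.
apply: functional_extensionality => k; rewrite convC.
case: k => [|k]; first by rewrite /Dop mul0r conv0 /Tw /= mulr0.
rewrite conv_Lw // /Dop /Lw /Tw /=.
case: k => [|k] /=; first by rewrite mulr0 addr0 expr0 !mul1r expr1.
by rewrite mulr0 [(-1)^+k.+1]exprS [w ^+ k.+2]exprS mulN1r mulNr [w * (_ * _)]mulrCA addNr.
Qed.

Lemma DFw ws : Dop (Fw ws) = conv (Tws ws) (Fw ws).
Proof.
elim: ws => [|w ws IH] /=.
  apply: functional_extensionality => k; rewrite /Dop /conv /Tws.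
  rewrite big1 /=; last by move=> i _; rewrite big_nil mul0r.
  by case: k => [|k] /=; rewrite ?mul0r ?mulr0.
apply: functional_extensionality => k.
have e1 : conv (conv (Tw w) (Lw w)) (Fw ws) = conv (Tw w) (conv (Lw w) (Fw ws)) by rewrite convA.
have e2 : conv (Lw w) (conv (Tws ws) (Fw ws)) = conv (Tws ws) (conv (Lw w) (Fw ws)).
  by rewrite convC convA [conv (Fw ws) _]convC.
rewrite Dconv DLw IH e1 e2 -convDl; congr (conv _ _ k).
by apply: functional_extensionality => j; rewrite /Tws big_cons.
Qed.

End PowerSeries.

Section CourseOfValues.
Variables (T : Type) (x0 : T) (step : nat -> (nat -> T) -> T).

Fixpoint cov_prefix k : seq T := match k with
  | 0 => [:: step 0 (fun _ => x0)]
  | k'.+1 => rcons (cov_prefix k') (step k'.+1 (nth x0 (cov_prefix k'))) end.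

Definition cov_rec j := nth x0 (cov_prefix j) j.

Lemma size_cov_prefix k : size (cov_prefix k) = k.+1.
Proof. by elim: k => //= k IH; rewrite size_rcons IH. Qed.

Lemma nth_cov_prefix k j : (j <= k)%N -> nth x0 (cov_prefix k) j = cov_rec j.
Proof.
elim: k => [|k IH]; first by rewrite leqn0 => /eqP ->.
rewrite leq_eqVlt => /orP[/eqP -> //|hj].
by rewrite /= nth_rcons size_cov_prefix hj IH.
Qed.

Lemma cov_recP :
  (forall k g g', (forall j, (j < k)%N -> g j = g' j) -> step k g = step k g') ->
  forall k, cov_rec k = step k cov_rec.
Proof.
move=> hstep [|k]; first by rewrite /cov_rec /=; apply: hstep.
rewrite /cov_rec /= nth_rcons size_cov_prefix ltnn eqxx; apply: hstep => j hj.
by rewrite nth_cov_prefix.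
Qed.

End CourseOfValues.

(* Over a field of characteristic 0, the equation  D E = S E,  E(0) = 1
   (S(0) = 0) is solved by  E = exp (int S ds/s),  computed coefficientwise. *)
Section ExpSeries.
Variable K : fieldType.
Hypothesis hchar : forall m : nat, m%:R = 0 :> K -> m = 0%N.

Lemma natr_neq0 (m : nat) : (0 < m)%N -> m%:R != 0 :> K.
Proof. by move=> hm; apply/eqP => /hchar h; rewrite h in hm. Qed.

Lemma two_neq0 : (2 : K) != 0.
Proof. exact: natr_neq0. Qed.

Definition exp_step (S : nat -> K) (k : nat) (g : nat -> K) : K :=
  if k == 0%N then 1 else k%:R^-1 * \sum_(0 <= j < k) g j * S (k - j)%N.

Definition exp_series (S : nat -> K) : nat -> K := cov_rec 0 (exp_step S).

Lemma exp_seriesP S k : exp_series S k = exp_step S k (exp_series S).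
Proof.
apply: cov_recP => {}k g g' h; rewrite /exp_step; case: (k == 0%N) => //.
by congr (_ * _); apply: eq_big_nat => j /andP[_ hj]; rewrite h.
Qed.

Lemma exp_series0 S : exp_series S 0 = 1.
Proof. by rewrite exp_seriesP. Qed.

Lemma Dexp_series S : S 0%N = 0 -> Dop (exp_series S) = conv S (exp_series S).
Proof.
move=> hS0; apply: functional_extensionality => k; rewrite /Dop.
case: k => [|k]; first by rewrite mul0r conv0 hS0 mul0r.
rewrite exp_seriesP /exp_step /= convC /conv [in RHS]big_nat_recr //= subnn hS0.
by rewrite mulr0 addr0 mulrA mulfV ?mul1r ?natr_neq0.
Qed.

(* The square root of  prod_w (1 + w s):  exp (1/2 int T ds/s)  squares to it. *)
Definition sqrt_prod (ws : seq K) : nat -> K := exp_series (fun k => 2^-1 * Tws ws k).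

Lemma sqrt_prodE ws k : conv (sqrt_prod ws) (sqrt_prod ws) k = Fw ws k.
Proof.
set E := sqrt_prod ws; have hT0 : 2^-1 * Tws ws 0 = 0 by rewrite Tws0 mulr0.
have hE := @Dexp_series (fun k => 2^-1 * Tws ws k) hT0; rewrite -/E in hE.
apply: (ode_unique (S := Tws ws)); last first.
- by rewrite conv0 Fw0 /E /sqrt_prod exp_series0 mulr1.
- exact: DFw.
- apply: functional_extensionality => j.
  rewrite Dconv (convC E (Dop E)) -mulr2n -mulr_natl hE.
  by rewrite convA convZl mulrA mulrV ?mul1r // unitfE two_neq0.
- exact: Tws0.
- move=> j x hj /eqP; rewrite mulf_eq0 => /orP[/eqP/hchar h|/eqP //].
  by rewrite h in hj.
Qed.

End ExpSeries.

(* Only the principal parts of h G^la (order >= -1) enter the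
   correction term, and the equation becomes a coefficient recursion of
   the shape handled by [coefficient_bound]. *)
Section LocalEquations.
Variables (K : fieldType) (n : nat) (lam : 'I_n -> K).

Definition corr (G : Pt n -> nat -> K) (mu : Pt n) (l : nat) : K :=
  \sum_(la : Pt n) expand_pr lam 1 la (lmul 1 (phi_h lam la) (G la)) mu (Posz l).

Lemma lmul_pos (L : int -> K) (G : nat -> K) (l : nat) :
  lmul 1 L G (Posz l) = \sum_(j < l.+2) L (Posz l - j%:Z) * G j.
Proof. by rewrite /lmul -PoszD addn1. Qed.

Lemma subz_succ l : Posz l - Posz l.+1 = Negz 0.
Proof. by rewrite -addn1 PoszD opprD addrA subrr add0r. Qed.

(* At a finite point lambda_m,  h = 1/(2s) + 1/2 sum_(i != m) 1/(s + lambda_m - lambda_i). *)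
Lemma phi_h_fin_neg1 m : phi_h lam (Some m) (Negz 0) = 2^-1.
Proof.
rewrite /phi_h (bigD1 m) //= eqxx /= big1 ?addr0 ?mulr1 // => i him.
by rewrite eq_sym (negbTE him).
Qed.

Lemma phi_h_fin_pos m t : phi_h lam (Some m) (Posz t) =
  2^-1 * \sum_(i | i != m) (-1) ^+ t * (lam m - lam i) ^- t.+1.
Proof.
rewrite /phi_h (bigD1 m) //= eqxx /= add0r; congr (_ * _).
apply: eq_bigr => i him; rewrite eq_sym (negbTE him) big_ord1 /= /unitpole /=.
by rewrite add0n binn mul1r mulr1 add1n.
Qed.

(* The regular part of h at lambda_m is  1/2 T/s  for the product over
   w_i = 1/(lambda_m - lambda_i). *)
Definition wsf m := [seq (lam m - lam i)^-1 | i <- enum (predC1 m)].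

Lemma Tws_fin m t :
  Tws (wsf m) t.+1 = \sum_(i | i != m) (-1) ^+ t * (lam m - lam i) ^- t.+1.
Proof.
rewrite /Tws big_map big_enum /=; apply: eq_big => // i _.
by rewrite /Tw /= exprVn.
Qed.

Lemma fin_eq (G : Pt n -> nat -> K) m :
  (forall l, dt (Some m) (G (Some m)) l + act_h lam G (Some m) l = 0) ->
  forall k, (1 <= k)%N -> Dop (G (Some m)) k + 2^-1 * G (Some m) k
      + 2^-1 * conv (Tws (wsf m)) (G (Some m)) k = corr G (Some m) k.-1.
Proof.
move=> heq [|l] // _; have := heq l; rewrite /dt /act_h lmul_pos big_ord_recr /=.
set Gm := G (Some m); rewrite -/(corr G (Some m) l) subz_succ phi_h_fin_neg1.
have -> : \sum_(i < l.+1) phi_h lam (Some m) (Posz l - (widen_ord (leqnSn l.+1) i)%:Z)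
            * Gm (widen_ord (leqnSn l.+1) i)
   = 2^-1 * conv (Tws (wsf m)) Gm l.+1.
  rewrite convC /conv big_mkord [in RHS]big_ord_recr /= subnn Tws0 mulr0 addr0 mulr_sumr.
  apply: eq_bigr => j _; have hj : (j <= l)%N by rewrite -ltnS.
  by rewrite /= subzn // subSn // phi_h_fin_pos Tws_fin mulrAC mulrA.
move=> e; rewrite /Dop; apply/eqP; rewrite -subr_eq0; apply/eqP; rewrite -e.
by rewrite [in RHS]addrA [in RHS]addrA; congr (_ - _); rewrite addrAC.
Qed.

(* At infinity,  h = n/2 s + 1/2 sum_(t>=1) (sum_i lambda_i^t) s^(t+1),  and
   the regular part is  -1/2 T/s  for the product over w_i = -lambda_i. *)
Definition wsi := [seq - lam i | i <- enum 'I_n].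

Lemma phi_h_inf_S t : phi_h lam None (Posz t.+1) = 2^-1 * \sum_i lam i ^+ t.
Proof.
rewrite /phi_h; congr (_ * _); apply: eq_bigr => i _.
by rewrite /= big_mkcond big_ord1 /= /unitpole eqxx subSS subn0 binn mul1r mul1r.
Qed.

Lemma phi_h_inf_0 : phi_h lam None (Posz 0) = 0.
Proof. by rewrite /phi_h big1 ?mulr0 // => i _; rewrite /= big_pred0. Qed.

Lemma phi_h_inf_neg t : phi_h lam None (Negz t) = 0.
Proof. by rewrite /phi_h big1 ?mulr0. Qed.

Lemma Tws_inf t : Tws wsi t.+1 = - \sum_i lam i ^+ t.+1.
Proof.
rewrite /Tws big_map big_enum /= -sumrN; apply: eq_bigr => i _.
rewrite /Tw /= [(- lam i) ^+ _]exprNn mulrA -exprD addnS -signr_odd /=.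
by rewrite oddD addbb /= expr1 mulN1r.
Qed.

Lemma inf_eq (G : Pt n -> nat -> K) :
  (forall l, dt (None : Pt n) (G None) l + act_h lam G None l = 0) ->
  forall k, (1 <= k)%N -> Dop (G None) k + (- (2^-1 * n%:R)) * G None k
      + 2^-1 * conv (Tws wsi) (G None) k = - corr G None k.+1.
Proof.
move=> heq k _; have := heq k.+1; rewrite /dt /act_h lmul_pos big_ord_recr big_ord_recr /=.
set Gi := G None; rewrite -/(corr G None k.+1).
rewrite subz_succ phi_h_inf_neg (_ : Posz k.+1 - Posz k.+1 = Posz 0); last by rewrite subrr.
rewrite phi_h_inf_0 !mul0r !addr0 big_ord_recr /= subzn // subSn // subnn phi_h_inf_S.
rewrite (_ : \sum_i lam i ^+ 0 = n%:R); last first.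
  by rewrite (eq_bigr (fun _ => 1)) => [|i _]; rewrite ?expr0 // sumr_const card_ord.
set S := \sum_(i < k) _.
have -> : S = - (2^-1 * conv (Tws wsi) Gi k).
  rewrite /S convC /conv big_mkord [in RHS]big_ord_recr /= subnn Tws0 mulr0 addr0.
  rewrite mulr_sumr -sumrN; apply: eq_bigr => j _; have hj : (j < k)%N by [].
  rewrite /= (subzn (leqW (ltnW hj))) (subSn (ltnW hj)).
  have [s hs] : exists s, (k - j)%N = s.+1 by exists (k - j).-1; rewrite prednK // subn_gt0.
  by rewrite hs phi_h_inf_S Tws_inf !mulrN opprK mulrA mulrAC.
move=> e; rewrite /Dop; apply/eqP; rewrite -subr_eq0 opprK; apply/eqP.
rewrite -[RHS]oppr0 -e !opprD !opprK mulNr !addrA; congr (_ + _).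
by rewrite addrAC.
Qed.

End LocalEquations.

Section Valuation.
Variables (K : fieldType) (v : K -> int).
Hypothesis hmul : forall x y : K, x != 0 -> y != 0 -> v (x * y) = v x + v y.
Hypothesis hum : forall x y : K, x != 0 -> y != 0 -> x + y != 0 ->
  (v x <= v (x + y)) || (v y <= v (x + y)).

Lemma v1 : v 1 = 0.
Proof.
have := hmul (oner_neq0 K) (oner_neq0 K); rewrite mulr1 => h.
by apply/eqP; rewrite -(addrK (v 1) (v 1)) -h subrr.
Qed.

Lemma vN x : x != 0 -> v (- x) = v x.
Proof.
have hN1 : (-1 : K) != 0 by rewrite oppr_eq0 oner_neq0.
have vN1 : v (-1) = 0.
  have := hmul hN1 hN1; rewrite mulrNN mulr1 v1 -mulr2n => /esym /eqP.
  by rewrite mulrn_eq0 /= => /eqP.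
by move=> hx; rewrite -mulN1r hmul // vN1 add0r.
Qed.

Lemma vinv x : x != 0 -> v (x^-1) = - v x.
Proof.
move=> hx; have hi : x^-1 != 0 by rewrite invr_eq0.
have := hmul hx hi; rewrite mulfV // v1 => /eqP; rewrite eq_sym addr_eq0 => /eqP ->.
by rewrite opprK.
Qed.

Lemma vge_ne x N : x != 0 -> vge v x N -> N <= v x.
Proof. by move=> hx [h|//]; rewrite h eqxx in hx. Qed.

Lemma vge_le x N M : M <= N -> vge v x N -> vge v x M.
Proof. by move=> hMN [->|h]; [left|right; apply: le_trans h]. Qed.

Lemma vge_add x y N : vge v x N -> vge v y N -> vge v (x + y) N.
Proof.
move=> [->|hx]; first by rewrite add0r.
move=> [->|hy]; first by rewrite addr0; right.
case: (eqVneq (x + y) 0) => [->|hxy]; first by left.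
case: (eqVneq x 0) => [->|x0]; first by rewrite add0r; right.
case: (eqVneq y 0) => [->|y0]; first by rewrite addr0; right.
right; case/orP: (hum x0 y0 hxy) => h; [exact: le_trans hx h | exact: le_trans hy h].
Qed.

Lemma vge_opp x N : vge v x N -> vge v (- x) N.
Proof.
case: (eqVneq x 0) => [-> _|x0 hx]; first by rewrite oppr0; left.
by right; rewrite vN // (vge_ne x0 hx).
Qed.

Lemma vge_sub x y N : vge v x N -> vge v y N -> vge v (x - y) N.
Proof. by move=> hx hy; apply: vge_add => //; apply: vge_opp. Qed.

Lemma vge_mul x y N M : vge v x N -> vge v y M -> vge v (x * y) (N + M).
Proof.
case: (eqVneq x 0) => [-> _ _|x0 hx]; first by rewrite mul0r; left.
case: (eqVneq y 0) => [-> _|y0 hy]; first by rewrite mulr0; left.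
by right; rewrite hmul // lerD // vge_ne.
Qed.

Lemma vge_mul0 x y N : vge v x N -> vge v y 0 -> vge v (x * y) N.
Proof. by move=> hx hy; have := vge_mul hx hy; rewrite addr0. Qed.

Lemma vge_0mul x y N : vge v x 0 -> vge v y N -> vge v (x * y) N.
Proof. by move=> hx hy; have := vge_mul hx hy; rewrite add0r. Qed.

Lemma vge_sum (I : Type) (r : seq I) (P : pred I) (F : I -> K) N :
  (forall i, P i -> vge v (F i) N) -> vge v (\sum_(i <- r | P i) F i) N.
Proof.
move=> h; apply: (big_ind (fun x => vge v x N)); [by left | move=> x y; exact: vge_add | exact: h].
Qed.

Lemma vge1 : vge v 1 0.
Proof. by right; rewrite v1. Qed.

Lemma vge_nat m : vge v (m%:R) 0.
Proof. by elim: m => [|m IH]; [left | rewrite -natr1; apply: vge_add => //; apply: vge1]. Qed.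

Lemma vge_exp x k : vge v x 0 -> vge v (x ^+ k) 0.
Proof.
move=> hx; elim: k => [|k IH]; first by rewrite expr0; apply: vge1.
by rewrite exprS; apply: vge_mul0.
Qed.

Lemma vge_unit_invexp (d : K) t : d != 0 -> v d = 0 -> vge v (d ^- t) 0.
Proof.
move=> d0 vd; right; rewrite vinv ?expf_neq0 //.
suff -> : v (d ^+ t) = 0 by [].
elim: t => [|t IH]; first by rewrite expr0 v1.
by rewrite exprS hmul ?expf_neq0 // vd IH.
Qed.

Lemma vge_lower_bound (s : seq K) : exists N, forall x, x \in s -> vge v x N.
Proof.
elim: s => [|x s [N IH]]; first by exists 0.
case: (eqVneq x 0) => [->|x0].
  by exists N => y; rewrite in_cons => /orP[/eqP ->|/IH //]; left.
exists (Num.min N (v x)) => y; rewrite in_cons => /orP[/eqP ->|/IH h].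
  by right; rewrite ge_min lexx orbT.
by apply: vge_le h; rewrite ge_min lexx.
Qed.

Lemma vge_conv (f g : nat -> K) N M : (forall k, vge v (f k) N) ->
  (forall k, vge v (g k) M) -> forall k, vge v (conv f g k) (N + M).
Proof. by move=> hf hg k; apply: vge_sum => i _; apply: vge_mul. Qed.

Lemma Fw_integral ws : (forall w, w \in ws -> vge v w 0) -> forall k, vge v (Fw ws k) 0.
Proof.
elim: ws => [|w ws IH] hws k /=.
  by case: (k == 0%N); [apply: vge1 | left].
rewrite -[0](addr0 0); apply: vge_conv => j; last first.
  by apply: IH => x hx; apply: hws; rewrite in_cons hx orbT.
rewrite /Lw; case: (j == 0%N); first exact: vge1.
by case: (j == 1%N); [apply: hws; exact: mem_head | left].
Qed.

Lemma sqrt_integral (E : nat -> K) : (2 : K) != 0 -> vge v (2^-1 : K) 0 ->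
  E 0%N = 1 -> (forall k, vge v (conv E E k) 0) -> forall k, vge v (E k) 0.
Proof.
move=> h2 hhalf hE0 hEE k; elim: k {-2}k (leqnn k) => [|n IH] k hk.
  by move: hk; rewrite leqn0 => /eqP ->; rewrite hE0; apply: vge1.
case: (posnP k) => [->|k0]; first by rewrite hE0; apply: vge1.
have e := conv_split E E k0; rewrite hE0 mul1r mulr1 in e.
have -> : E k = 2^-1 * (conv E E k - \sum_(1 <= i < k) E i * E (k - i)%N).
  by rewrite e addrAC addrK -mulr2n -[E k *+ 2]mulr_natl mulKf.
apply: vge_0mul => //; apply: vge_sub => //.
rewrite big_nat_cond; apply: vge_sum => i /andP[/andP[hi1 hi2] _].
rewrite -[0](addr0 0); apply: vge_mul; apply: IH.
  by rewrite -ltnS; apply: leq_trans hk.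
by rewrite -ltnS; apply: leq_trans hk; rewrite ltn_subrL hi1 k0.
Qed.

Lemma unit_series_divide (E G : nat -> K) (B : nat -> int) :
  E 0%N = 1 -> (forall k, vge v (E k) 0) ->
  (forall i j, (i <= j)%N -> B j <= B i) ->
  (forall k, vge v (conv E G k) (B k)) -> forall k, vge v (G k) (B k).
Proof.
move=> hE0 hE hB hP k; elim: k {-2}k (leqnn k) => [|n IH] k hk.
  by move: hk; rewrite leqn0 => /eqP ->; have := hP 0%N; rewrite conv0 hE0 mul1r.
have -> : G k = conv E G k - \sum_(1 <= i < k.+1) E i * G (k - i)%N.
  by rewrite /conv big_ltn // subn0 hE0 mul1r addrK.
apply: vge_sub; first exact: hP.
rewrite big_nat_cond; apply: vge_sum => i /andP[/andP[hi1 hi2] _].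
apply: vge_0mul => //; apply: vge_le (hB _ _ (leq_subr i k)) _; apply: IH.
by rewrite leq_subLR (leq_trans hk) // -add1n leq_add2r.
Qed.

Hypothesis hchar : forall m : nat, m%:R = 0 :> K -> m = 0%N.

Lemma sqrt_prod_integral ws : vge v (2^-1 : K) 0 ->
  (forall w, w \in ws -> vge v w 0) -> forall k, vge v (sqrt_prod ws k) 0.
Proof.
move=> hhalf hws; apply: sqrt_integral => //; first exact: two_neq0.
by move=> k; rewrite sqrt_prodE //; apply: Fw_integral.
Qed.

(* Proof: multiply by the integral
   series E = sqrt (prod (1 + w s)), for which the recursion becomes
   (k + a) (E G)_k = (E R)_k, then divide by E again. *)
Lemma coefficient_bound (ws : seq K) (a : K) (c : nat -> nat) (G Rhs : nat -> K)
    (N : int) :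
  vge v (2^-1 : K) 0 -> (forall w, w \in ws -> vge v w 0) -> vge v a 0 ->
  (forall i j, (i <= j)%N -> (c i <= c j)%N) ->
  (forall k, (1 <= k)%N -> k%:R + a != 0 /\ v (k%:R + a) <= (c k)%:Z) ->
  vge v (G 0%N) N -> (forall k, (1 <= k)%N -> vge v (Rhs k) N) ->
  (forall k, (1 <= k)%N -> Dop G k + a * G k + 2^-1 * conv (Tws ws) G k = Rhs k) ->
  forall k, vge v (G k) (N - (c k)%:Z).
Proof.
move=> hhalf hws ha hc hka hG0 hR heq.
set E := sqrt_prod ws.
have hE := sqrt_prod_integral hhalf hws; rewrite -/E in hE.
pose S i := 2^-1 * Tws ws i.
pose R' k := Dop G k + a * G k + conv S G k.
have hR' : forall k, vge v (R' k) N.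
  case=> [|k]; last by rewrite /R' convZl heq //; apply: hR.
  by rewrite /R' /Dop mul0r add0r conv0 /S Tws0 mulr0 mul0r addr0; apply: vge_0mul.
apply: (unit_series_divide (E := E)) => [|//|i j hij|[|k]].
- exact: exp_series0 S.
- by apply: lerB; rewrite // lez_nat hc.
- by rewrite conv0 /E /sqrt_prod exp_series0 mul1r; apply: vge_le hG0; rewrite gerBl.
have [hne hv] := hka k.+1 isT.
have -> : conv E G k.+1 = (k.+1%:R + a)^-1 * conv E R' k.+1.
  by rewrite -integrating_factor ?mulKf // Dexp_series // /S Tws0 mulr0.
rewrite [N - _]addrC; apply: vge_mul; first by right; rewrite vinv // lerN2.
by have := vge_conv hE hR' k.+1; rewrite add0r.
Qed.


(* Frac W(k): the valuation is normalized by v(p) = 1 with p an odd prime,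
   so v(m) <= log_p m for every positive integer m and 2 is a unit. *)
Section Padic.
Variable p : nat.
Hypothesis hvp : v (p%:R) = 1.
Hypothesis hprime : prime p.
Hypothesis hodd : odd p.

Lemma v_coprime u : (0 < u)%N -> coprime u p -> v (u%:R) = 0.
Proof.
move=> hu cop; case: (egcdnP p hu) => km kn h _.
move: cop; rewrite /coprime => /eqP g1; rewrite g1 in h.
have u0 := natr_neq0 hchar hu.
apply/eqP; rewrite eq_le (vge_ne u0 (vge_nat u)) andbT leNgt; apply/negP => hlt.
have km0 : (0 < km)%N by case: km h => //; rewrite mul0n addn1.
have e1 : vge v ((km * u)%:R : K) 1.
  right; rewrite natrM hmul ?(natr_neq0 hchar) // -[1](add0r 1) lerD //.
  exact: vge_ne (natr_neq0 hchar km0) (vge_nat _).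
have e2 : vge v ((kn * p)%:R : K) 1.
  by rewrite natrM; apply: vge_0mul; [exact: vge_nat | right; rewrite hvp].
have := vge_sub e1 e2; rewrite h natrD addrAC subrr add0r.
by move/(vge_ne (oner_neq0 K)); rewrite v1.
Qed.

Lemma v_pexp e : v ((p ^ e)%:R) = e%:Z.
Proof.
elim: e => [|e IH]; first by rewrite expn0 v1.
have p0 := prime_gt0 hprime.
by rewrite expnS natrM hmul ?hvp ?IH ?(natr_neq0 hchar) ?expn_gt0 ?p0.
Qed.

Lemma v_nat_le (m : nat) : (0 < m)%N -> v (m%:R) <= (trunc_log p m)%:Z.
Proof.
move=> hm; case: (pfactor_coprime hprime hm) => u cop hu.
have u0 : (0 < u)%N by move: hm; rewrite hu muln_gt0 => /andP[].
have p0 := prime_gt0 hprime.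
rewrite {1}hu natrM hmul ?(natr_neq0 hchar) ?expn_gt0 ?p0 //.
rewrite (v_coprime u0) 1?coprime_sym // v_pexp add0r lez_nat.
by apply: trunc_log_max; [exact: prime_gt1 | rewrite {2}hu leq_pmull].
Qed.

Lemma v_half : v (2^-1 : K) = 0.
Proof. by rewrite vinv ?(two_neq0 hchar) // v_coprime // coprime2n. Qed.

Lemma vge_half : vge v (2^-1 : K) 0.
Proof. by right; rewrite v_half. Qed.

Lemma half_bound (d M : nat) : (0 < d)%N -> (d <= M)%N ->
  (d%:R * 2^-1 : K) != 0 /\ v (d%:R * 2^-1) <= (trunc_log p M)%:Z.
Proof.
move=> d0 dM; have h2 : (2^-1 : K) != 0 by rewrite invr_eq0 two_neq0.
split; first by rewrite mulf_neq0 ?(natr_neq0 hchar).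
rewrite hmul ?(natr_neq0 hchar) // v_half addr0.
by apply: le_trans (v_nat_le d0) _; rewrite lez_nat leq_trunc_log.
Qed.

(* The curve data: n = 2g + 1 points lambda_i, integral and pairwise
   distinct modulo p. *)
Section Hyperelliptic.
Variables (n : nat) (lam : 'I_n -> K).
Hypothesis hn : odd n.
Hypothesis hlam_int : forall i, vge v (lam i) 0.
Hypothesis hlam_dist : forall i j, i != j -> lam i - lam j != 0 /\ v (lam i - lam j) = 0.

(* The bound  c(k) = log_p (2k + n)  on the valuations of the indicial
   factors  k + 1/2  (finite points) and  k - n/2  (infinity). *)
Lemma indicial_mono i j : (i <= j)%N ->
  (trunc_log p (2 * i + n) <= trunc_log p (2 * j + n))%N.
Proof. by move=> hij; apply: leq_trunc_log; rewrite leq_add2r leq_mul2l hij orbT. Qed.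

Lemma indicial_fin k : (1 <= k)%N ->
  k%:R + 2^-1 != 0 :> K /\ v (k%:R + 2^-1) <= (trunc_log p (2 * k + n))%:Z.
Proof.
move=> _; have -> : (k%:R + 2^-1 : K) = (2 * k + 1)%:R * 2^-1.
  by rewrite natrD natrM mulrDl mulrAC mulfV ?(two_neq0 hchar) // mul1r div1r.
apply: half_bound; first by rewrite addn1.
by rewrite leq_add2l; case: n hn.
Qed.

Lemma indicial_inf k : (1 <= k)%N ->
  k%:R + (- (2^-1 * n%:R)) != 0 :> K /\
  v (k%:R + (- (2^-1 * n%:R))) <= (trunc_log p (2 * k + n))%:Z.
Proof.
move=> _; have -> : (k%:R : K) = (2 * k)%:R * 2^-1.
  by rewrite natrM mulrAC mulfV ?(two_neq0 hchar) // mul1r.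
case: (ltngtP n (2 * k)) => hnk.
- have -> : (2 * k)%:R * 2^-1 + - (2^-1 * n%:R) = (2 * k - n)%:R * 2^-1 :> K.
    by rewrite natrB ?(ltnW hnk) // mulrBl [2^-1 * _]mulrC.
  apply: half_bound; first by rewrite subn_gt0.
  exact: leq_trans (leq_subr _ _) (leq_addr _ _).
- have -> : (2 * k)%:R * 2^-1 + - (2^-1 * n%:R) = - ((n - 2 * k)%:R * 2^-1) :> K.
    by rewrite natrB ?(ltnW hnk) // mulrBl opprB [2^-1 * _]mulrC.
  have hd : (0 < n - 2 * k)%N by rewrite subn_gt0.
  have hdM : (n - 2 * k <= 2 * k + n)%N := leq_trans (leq_subr _ _) (leq_addl _ _).
  have [h0 hv] := half_bound hd hdM.
  by rewrite oppr_eq0 vN.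
- by move: hn; rewrite hnk oddM.
Qed.

Lemma wsf_integral m w : w \in wsf lam m -> vge v w 0.
Proof.
move=> /mapP[i]; rewrite mem_enum /= => him ->.
have [d0 vd] : lam m - lam i != 0 /\ v (lam m - lam i) = 0.
  by apply: hlam_dist; rewrite eq_sym.
by right; rewrite vinv // vd.
Qed.

Lemma wsi_integral w : w \in wsi lam -> vge v w 0.
Proof. by move=> /mapP[i _ ->]; apply: vge_opp. Qed.

(* The correction term only involves the coefficients of order 0 and -1 of
   the products h G^la, with integral expansion factors. *)
Lemma corr_fin_bound (G : Pt n -> nat -> K) N :
  (forall la, vge v (lmul 1 (phi_h lam la) (G la) 0) N /\
              vge v (lmul 1 (phi_h lam la) (G la) (Negz 0)) N) ->
  forall m l, vge v (corr lam G (Some m) l) N.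
Proof.
move=> hF m l; apply: vge_sum => -[i|] _ /=.
  case: eqP => [_|/eqP hmi]; first by left.
  rewrite big_ord1; apply: vge_mul0; first exact: (hF (Some i)).2.
  have [d0 vd] := hlam_dist hmi.
  apply: vge_mul0; first apply: vge_mul0; [|exact: vge_nat|exact: vge_unit_invexp].
  by apply: vge_exp; apply: vge_opp; apply: vge1.
apply: vge_sum => j _; apply: vge_mul0; last exact: vge_exp.
apply: vge_mul0; last exact: vge_nat.
case: j => -[|[|j]] //= _; [exact: (hF None).1 | exact: (hF None).2].
Qed.

Lemma corr_inf_bound (G : Pt n -> nat -> K) N :
  (forall la, vge v (lmul 1 (phi_h lam la) (G la) (Negz 0)) N) ->
  forall k, vge v (corr lam G None k.+1) N.
Proof.
move=> hF k; apply: vge_sum => -[i|] _ /=; last by left.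
apply: vge_sum => j _; rewrite (ord1 j) /=.
by apply: vge_mul0; [apply: vge_mul0; [exact: hF | exact: vge_nat] | exact: vge_exp].
Qed.

(* In the 1-component the connection is d/dt, which kills every
   non-constant coefficient in characteristic 0. *)
Lemma G0_vanish (G0 : Pt n -> nat -> K) :
  (forall mu l, dt mu (G0 mu) l = 0) -> forall mu l, (1 <= l)%N -> G0 mu l = 0.
Proof.
move=> h [m|] [|l] // _.
  have := h (Some m) l; rewrite /dt => /eqP; rewrite mulf_eq0.
  by case/orP => [/eqP/hchar //|/eqP].
have := h None l.+2; rewrite /dt /= => /eqP; rewrite oppr_eq0 mulf_eq0.
by case/orP => [/eqP/hchar //|/eqP].
Qed.

Lemma coefficient_valuation_bound (G0 G1 : Pt n -> nat -> K) : inH v p lam G0 G1 ->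
  exists N : int, forall mu (j : bool) l, (1 <= l)%N ->
    vge v ((if j then G1 else G0) mu l) (N - (trunc_log p (2 * l + n))%:Z).
Proof.
move=> [_ [_ [hd0 hd1]]].
pose F la := lmul 1 (phi_h lam la) (G1 la).
have [N hN] := vge_lower_bound ([seq F la x | la <- enum {: Pt n}, x <- [:: 0; Negz 0]]
                                ++ [seq G1 la 0%N | la <- enum {: Pt n}]).
have hF la : vge v (F la 0) N /\ vge v (F la (Negz 0)) N.
  by split; apply: hN; rewrite mem_cat; apply/orP; left;
     apply: allpairs_f; rewrite ?mem_enum ?in_cons ?eqxx ?orbT.
have hG la : vge v (G1 la 0%N) N.
  by apply: hN; rewrite mem_cat; apply/orP; right; apply: map_f; rewrite mem_enum.
exists N => mu [] l hl; last by rewrite (G0_vanish hd0) //; left.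
case: mu => [m|].
  apply: (coefficient_bound (ws := wsf lam m) (a := 2^-1) (G := G1 (Some m))
            (c := fun k => trunc_log p (2 * k + n))
            (Rhs := fun k => corr lam G1 (Some m) k.-1)) => //.
  - exact: vge_half.
  - exact: wsf_integral.
  - exact: vge_half.
  - exact: indicial_mono.
  - exact: indicial_fin.
  - by move=> k _; apply: corr_fin_bound.
  - exact: fin_eq.
apply: (coefficient_bound (ws := wsi lam) (a := - (2^-1 * n%:R)) (G := G1 None)
          (c := fun k => trunc_log p (2 * k + n))
          (Rhs := fun k => - corr lam G1 None k.+1)) => //.
- exact: vge_half.
- exact: wsi_integral.
- by apply: vge_opp; apply: vge_0mul; [exact: vge_half | exact: vge_nat].
- exact: indicial_mono.
- exact: indicial_inf.
- by move=> k _; apply: vge_opp; apply: corr_inf_bound => la; case: (hF la).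
- exact: inf_eq.
Qed.

End Hyperelliptic.
End Padic.
End Valuation.

Lemma int_to_R_sub (a b : nat) : int_to_R (a%:Z - b%:Z) = Rminus (INR a) (INR b).
Proof.
case: (leqP b a) => h.
  by rewrite subzn //= minus_INR //; apply/ssrnat.leP.
have -> : a%:Z - b%:Z = - (b - a)%N%:Z by rewrite -(subzn (ltnW h)) opprB.
have [c hc] : exists c, (b - a)%N = c.+1 by exists (b - a).-1; rewrite prednK // subn_gt0.
rewrite hc; change (int_to_R (- (Posz c.+1))) with (Ropp (INR c.+1)).
rewrite -hc minus_INR; last by apply/ssrnat.leP; apply: ltnW.
lra.
Qed.

Lemma int_rep (z : int) : exists a b : nat, z = a%:Z - b%:Z.
Proof.
case: z => [a|c]; first by exists a, 0%N; rewrite subr0.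
by exists 0%N, c.+1; rewrite NegzE sub0r.
Qed.

Lemma int_to_R_le (x y : int) : x <= y -> Rle (int_to_R x) (int_to_R y).
Proof.
have [a1 [b1 ->]] := int_rep x; have [a2 [b2 ->]] := int_rep y => h.
rewrite !int_to_R_sub.
have : ((a1 + b2)%N <= (a2 + b1)%N)%N.
  rewrite -lez_nat !PoszD -subr_ge0.
  have -> : a2%:Z + b1%:Z - (a1%:Z + b2%:Z) = a2%:Z - b2%:Z - (a1%:Z - b1%:Z).
    by rewrite opprD opprB !addrA [a2%:Z - b2%:Z + b1%:Z]addrAC addrAC.
  by rewrite subr_ge0.
move/ssrnat.leP/le_INR; rewrite !plus_INR; lra.
Qed.

Lemma int_to_R_subn (x : int) (t : nat) :
  int_to_R (x - t%:Z) = Rminus (int_to_R x) (INR t).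
Proof.
have [a [b ->]] := int_rep x.
rewrite -addrA -opprD -PoszD !int_to_R_sub plus_INR; lra.
Qed.

Lemma trunc_log_le_logp (p m : nat) : (1 < p)%N -> (0 < m)%N ->
  Rle (INR (trunc_log p m)) (logp p m).
Proof.
move=> hp hm.
have hp0 : Rlt R0 (INR p) by apply: lt_0_INR; apply/ssrnat.ltP; apply: ltnW.
have hlnp : Rlt R0 (ln (INR p)).
  have := ln_increasing _ _ Rlt_0_1 (lt_1_INR _ (ssrnat.ltP hp)); rewrite ln_1; lra.
have hpow : Rle (pow (INR p) (trunc_log p m)) (INR m).
  rewrite -pow_INR; apply: le_INR; apply/ssrnat.leP.
  suff -> : Nat.pow p (trunc_log p m) = (p ^ trunc_log p m)%N by exact: trunc_logP.
  by elim: (trunc_log p m) => [|e IH] //=; rewrite IH expnS.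
have hln : Rle (Rmult (INR (trunc_log p m)) (ln (INR p))) (ln (INR m)).
  rewrite -ln_pow //; case: (Rle_lt_or_eq_dec _ _ hpow) => [hlt|->]; last exact: Rle_refl.
  by apply: Rlt_le; apply: ln_increasing => //; apply: pow_lt.
apply: (Rmult_le_reg_r (ln (INR p))) => //.
by rewrite /logp /Rdiv Rmult_assoc Rinv_l ?Rmult_1_r //; lra.
Qed.

Lemma trunc_log_affine (p n l : nat) : (1 < p)%N -> (0 < l)%N ->
  Rle (INR (trunc_log p (2 * l + n))) (Rplus (logp p l) (logp p (2 + n))).
Proof.
move=> hp hl.
have hmono : (trunc_log p (2 * l + n) <= trunc_log p ((2 + n) * l))%N.
  by apply: leq_trunc_log; rewrite mulnDl leq_add2l -{1}(muln1 n) leq_mul2l hl orbT.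
have hl0 : Rlt R0 (INR l) by apply: lt_0_INR; apply/ssrnat.ltP.
have hn0 : Rlt R0 (INR (2 + n)) by apply: lt_0_INR; apply/ssrnat.ltP.
have hlog : logp p ((2 + n) * l) = Rplus (logp p l) (logp p (2 + n)).
  by rewrite /logp mult_INR ln_mult // /Rdiv Rmult_plus_distr_r Rplus_comm.
rewrite -hlog; apply: Rle_trans (trunc_log_le_logp hp _); last by rewrite muln_gt0 hl.
by apply: le_INR; apply/ssrnat.leP.
Qed.

Theorem mainTheorem4 (K : fieldType) (v : K -> int) (p : nat)
  (hK : witt_frac v p) (g : nat) (hg : (1 <= g)%N)
  (lam : 'I_(2 * g + 1) -> K)
  (hlam_int : forall i, vge v (lam i) 0)
  (hlam_dist : forall i j, i != j -> lam i - lam j != 0 /\ v (lam i - lam j) = 0)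
  (G0 G1 : Pt (2 * g + 1) -> nat -> K)
  (hH : inH v p lam G0 G1) :
  exists alpha beta : R,
    forall (mu : Pt (2 * g + 1)) (j : bool) (l : nat), (1 <= l)%N ->
      let b := (if j then G1 else G0) mu l in
      b != 0 ->
      Rle (Ropp (Rplus (Rmult alpha (logp p l)) beta)) (int_to_R (v b)).
Proof.
case: hK => [hprime [hodd [hchar [hmul [hum [hvp _]]]]]].
have hn : odd (2 * g + 1) by rewrite oddD oddM.
have [N hN] := coefficient_valuation_bound hmul hum hchar hvp hprime hodd hn
                  hlam_int hlam_dist hH.
exists R1, (Rminus (logp p (2 + (2 * g + 1))) (int_to_R N)).
move=> mu j l hl b hb; rewrite {}/b in hb *.
have [hb0|hv] := hN mu j l hl; first by rewrite hb0 eqxx in hb.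
have := int_to_R_le hv; rewrite int_to_R_subn.
have := trunc_log_affine (2 * g + 1) (prime_gt1 hprime) hl.
lra.
Qed.
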